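(* Let $n\ge 1$, let $f=(f_1,\dots,f_n):\{0,1\}^n\to\{0,1\}^n$ be a Boolean model, and let $h$ be a multivalued refinement of $f$ on $X=\prod_{j=1}^n\{0,1,\dots,m_j\}$ (with $m_j\ge 1$ integers, at least one $m_j>1$) built by the threshold construction described in the context. Let $J=\{j\in\{1,\dots,n\}: m_j>1\}$ and suppose that no component $g_j$ with $j\in J$ is self-inhibited. Let $a,a'\in\{0,1\}^n$, and let $b,b'\in X$ be obtained from $a$ (resp. $a'$) by replacing, for each $j\in J$, the coordinate $a_j$ (resp. $a'_j$) by $m_j$ whenever it equals $1$ (other coordinates unchanged). If there exists a trajectory from $a$ to $a'$ in the asynchronous state transition graph of $f$, then there exists a trajectory from $b$ to $b'$ in the asynchronous state transition graph of $h$.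
   Context: Components $g_1,\dots,g_n$; a state $x$ gives activity levels $x_j$. Asynchronous dynamics of a map $h:X\to X$ (Boolean or multivalued, $X=\prod_j\{0,\dots,m_j\}$ with $h_j(x)-x_j\in\{-1,0,1\}$): there is a transition $x\to y$ if there is $i_0$ with $x_{i_0}\neq h_{i_0}(x)$, $y_{i_0}=x_{i_0}+\mathrm{sign}(h_{i_0}(x)-x_{i_0})$, and $y_j=x_j$ for $j\ne i_0$. A trajectory is a finite sequence of consecutive transitions. For $x\in X$, $\alpha(x)=\{x'\in\{0,1\}^n:\forall j,\ (x_j=0\Rightarrow x'_j=0)\text{ and }(x_j=m_j\Rightarrow x'_j=1)\}$. A multivalued model $h:X\to X$ (with $h_j(x)-x_j\in\{-1,0,1\}$) is a refinement of $f$ if for all $x\in X$ and $j$: $h_j(x)<x_j\Rightarrow\exists x'\in\alpha(x),\ f_j(x')<x'_j$, and $h_j(x)>x_j\Rightarrow\exists x'\in\alpha(x),\ f_j(x')>x'_j$. Threshold construction: write each $f_{j_0}$ in a shortest disjunctive normal form $f_{j_0}(x)=\bigvee_{h}\bigwedge_{k} w_{j_0,h,k}x_{j_{j_0,h,k}}$, where each $w$ is either empty or negation $\neg$. For each literal with variable index $j=j_{j_0,h,k}$ such that $m_j>1$, choose a threshold $s\in\{0,\dots,m_j-1\}$ and replace the literal $x_j$ by the condition $x_j\ge s+1$ and the literal $\neg x_j$ by $x_j<s+1$ (literals with $m_j=1$ are unchanged). This yields a Boolean-valued function on $X$; set $\mathcal H_{j_0}(x)=+1$ if it is true and $-1$ otherwise,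 and define $h_j(x)=\max(0,\min(m_j,x_j+\mathcal H_j(x)))$. Component $g_j$ is self-inhibited if the literal $\neg x_j$ occurs in the (shortest DNF of) $f_j$. *)

From mathcomp Require Import all_boot all_order.
Set Implicit Arguments. Unset Strict Implicit. Unset Printing Implicit Defensive.

Section Defs.
Variable n : nat.

Definition bstate := {ffun 'I_n -> bool}.
Definition mstate := {ffun 'I_n -> nat}.

Definition in_X (m : 'I_n -> nat) (x : mstate) : bool := [forall j, x j <= m j].

Definition btrans (f : bstate -> bstate) (x y : bstate) : bool :=
  [exists i0, [&& x i0 != f x i0, y i0 == f x i0 &
               [forall j, (j != i0) ==> (y j == x j)]]].

Definition mtrans (h : mstate -> mstate) (x y : mstate) : bool :=
  [exists i0, [&& x i0 != h x i0,
               y i0 == (if x i0 < h x i0 then (x i0).+1 else (x i0).-1) &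
               [forall j, (j != i0) ==> (y j == x j)]]].

Definition trajectory (S : eqType) (tr : rel S) (x y : S) : Prop :=
  exists s : seq S, path tr x s /\ last x s = y.

(* Boolean DNF: list of clauses, clause = list of literals (j, true) = x_j,
   (j, false) = ~ x_j. *)
Definition literal := ('I_n * bool)%type.
Definition dnf := seq (seq literal).

Definition eval_dnf (D : dnf) (a : bstate) : bool :=
  has (fun c => all (fun l : literal => a l.1 == l.2) c) D.

Definition dnf_size (D : dnf) : nat := sumn (map size D).

Definition shortest_dnf (D : dnf) (g : bstate -> bool) : Prop :=
  (forall a, eval_dnf D a = g a) /\
  (forall D' : dnf, (forall a, eval_dnf D' a = g a) -> dnf_size D <= dnf_size D').

(* DNF annotated with a threshold s for every literal occurrence *)
Definition tliteral := ('I_n * bool * nat)%type.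
Definition tdnf := seq (seq tliteral).

Definition strip (D : tdnf) : dnf := map (map (fun l : tliteral => (l.1.1, l.1.2))) D.

Definition thresholds_ok (m : 'I_n -> nat) (D : tdnf) : bool :=
  all (fun c => all (fun l : tliteral => (1 < m l.1.1) ==> (l.2 < m l.1.1)) c) D.

Definition eval_tlit (m : 'I_n -> nat) (x : mstate) (l : tliteral) : bool :=
  let: (j, pos, s) := l in
  if 1 < m j then (if pos then s.+1 <= x j else x j < s.+1)
  else (if pos then x j == 1 else x j == 0).

Definition eval_tdnf (m : 'I_n -> nat) (D : tdnf) (x : mstate) : bool :=
  has (fun c => all (eval_tlit m x) c) D.

(* h_j(x) = max(0, min(m_j, x_j + H_j(x))), H_j = +1 if true, -1 otherwise
   (natural-number truncated predecessor realizes max(0, .)) *)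
Definition threshold_model (m : 'I_n -> nat) (D : 'I_n -> tdnf) (x : mstate) : mstate :=
  [ffun j => if eval_tdnf m (D j) x then minn (m j) (x j).+1
             else minn (m j) (x j).-1].

Definition in_alpha (m : 'I_n -> nat) (x : mstate) (x' : bstate) : bool :=
  [forall j, ((x j == 0) ==> ~~ x' j) && ((x j == m j) ==> x' j)].

Definition refinement (m : 'I_n -> nat) (f : bstate -> bstate) (h : mstate -> mstate) : Prop :=
  forall x : mstate, in_X m x -> forall j : 'I_n,
    (h x j < x j -> exists x' : bstate, in_alpha m x x' /\ f x' j < x' j) /\
    (h x j > x j -> exists x' : bstate, in_alpha m x x' /\ f x' j > x' j).

Definition self_inhibited (D : dnf) (j : 'I_n) : bool :=
  has (fun c => (j, false) \in c) D.

Definition lift_state (m : 'I_n -> nat) (a : bstate) : mstate :=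
  [ffun j => if a j then (if 1 < m j then m j else 1) else 0].

End Defs.

From mathcomp Require Import all_boot all_order.
From mathcomp Require Import zify.
Set Implicit Arguments. Unset Strict Implicit. Unset Printing Implicit Defensive.

(* A Boolean transition a -> a' flipping coordinate i is simulated by m_i unit
   moves of x_i between 0 and m_i, the other coordinates staying at their
   lifted values.  A lifted state satisfies exactly the threshold literals
   whose Boolean versions a satisfies, and since ~x_i does not occur in the
   DNF of f_i, the threshold DNF of h_i is monotone in x_i.  Hence it keeps
   the value f_i(a) along the whole way: true from x_i = 0 upwards when a_i is
   switched on, false from x_i = m_i downwards when it is switched off, so h_i
   keeps pushing x_i in the right direction. *)

Section Trajectory.
Variables (S : eqType) (tr : rel S).

Lemma trajectory_refl x : trajectory tr x x.
Proof. by exists [::]. Qed.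

Lemma trajectory1 x y : tr x y -> trajectory tr x y.
Proof. by move=> xy; exists [:: y]; rewrite /= xy. Qed.

Lemma trajectory_trans x y z :
  trajectory tr x y -> trajectory tr y z -> trajectory tr x z.
Proof.
move=> [s1 [p1 <-]] [s2 [p2 <-]]; exists (s1 ++ s2).
by rewrite cat_path last_cat p1 p2.
Qed.

Lemma trajectory_climb (g : nat -> S) p q :
  (forall k, p <= k < q -> tr (g k) (g k.+1)) -> p <= q ->
  trajectory tr (g p) (g q).
Proof.
elim: q => [|q IH] steps; first by rewrite leqn0 => /eqP ->; apply: trajectory_refl.
rewrite leq_eqVlt ltnS => /orP [/eqP -> | pq]; first exact: trajectory_refl.
apply: trajectory_trans (IH _ pq) (trajectory1 (steps _ _)); last by rewrite pq ltnSn.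
by move=> k kq; apply: steps; lia.
Qed.

Lemma trajectory_descend (g : nat -> S) p q :
  (forall k, p <= k < q -> tr (g k.+1) (g k)) -> p <= q ->
  trajectory tr (g q) (g p).
Proof.
elim: q => [|q IH] steps; first by rewrite leqn0 => /eqP ->; apply: trajectory_refl.
rewrite leq_eqVlt ltnS => /orP [/eqP -> | pq]; first exact: trajectory_refl.
apply: trajectory_trans (trajectory1 (steps _ _)) (IH _ pq); first by rewrite pq ltnSn.
by move=> k kq; apply: steps; lia.
Qed.

End Trajectory.

Lemma trajectory_simulation (S T : eqType) (tr : rel S) (tr' : rel T) (g : S -> T) :
  (forall x y, tr x y -> trajectory tr' (g x) (g y)) ->
  forall x y, trajectory tr x y -> trajectory tr' (g x) (g y).
Proof.
move=> sim x y [s [+ <-]]; elim: s x => [|z s IH] x /=.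
  by move=> _; apply: trajectory_refl.
by case/andP=> xz zs; apply: trajectory_trans (sim _ _ xz) (IH _ zs).
Qed.

Section SetCoord.
Variable n : nat.
Implicit Types (x : mstate n) (i : 'I_n).

Definition set_coord x i (k : nat) : mstate n :=
  [ffun j => if j == i then k else x j].

Lemma set_coord_id x i : set_coord x i (x i) = x.
Proof. by apply/ffunP => j; rewrite ffunE; case: eqVneq => // ->. Qed.

Lemma set_coord_set x i k l : set_coord (set_coord x i k) i l = set_coord x i l.
Proof. by apply/ffunP => j; rewrite !ffunE; case: eqVneq. Qed.

Lemma mtrans_set_coord (h : mstate n -> mstate n) x i :
  x i != h x i ->
  mtrans h x (set_coord x i (if x i < h x i then (x i).+1 else (x i).-1)).
Proof.
move=> moves; apply/existsP; exists i; apply/and3P; split=> //.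
  by rewrite ffunE eqxx.
by apply/forallP => j; apply/implyP => /negbTE ji; rewrite ffunE ji.
Qed.

End SetCoord.

Section ThresholdModel.
Variables (n : nat) (m : 'I_n -> nat).

Lemma eval_tlit_lift (a : bstate n) (l : tliteral n) :
  (1 < m l.1.1) ==> (l.2 < m l.1.1) ->
  eval_tlit m (lift_state m a) l = (a l.1.1 == l.1.2).
Proof.
case: l => [[j pos] s] /=; rewrite ffunE.
by case: (ltnP 1 (m j)) => /= mj; case: (a j); case: pos => /=; lia.
Qed.

Lemma eval_tdnf_lift (E : tdnf n) (a : bstate n) :
  thresholds_ok m E -> eval_tdnf m E (lift_state m a) = eval_dnf (strip E) a.
Proof.
move=> /allP thr; rewrite /eval_dnf /strip has_map; apply: eq_in_has => c cE.
rewrite /= all_map; apply: eq_in_all => l lc.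
by apply: eval_tlit_lift; move/allP: (thr c cE); apply.
Qed.

Lemma eval_tdnf_set_coord_mono (E : tdnf n) (x : mstate n) (i : 'I_n) k l :
  1 < m i -> ~~ self_inhibited (strip E) i -> k <= l ->
  eval_tdnf m E (set_coord x i k) -> eval_tdnf m E (set_coord x i l).
Proof.
move=> mi no_self kl /hasP [c cE /allP sat]; apply/hasP; exists c => //.
apply/allP => -[[j pos] s] lc; move: (sat _ lc); rewrite /= !ffunE.
case: eqVneq => [ji | //]; subst j; rewrite mi.
case: pos lc => lc; first by lia.
case/negP: no_self; apply/hasP; exists (map (fun l : tliteral n => (l.1.1, l.1.2)) c).
  exact: map_f.
by apply/mapP; exists (i, false, s).
Qed.

Lemma threshold_model_up (D : 'I_n -> tdnf n) (x : mstate n) (i : 'I_n) :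
  eval_tdnf m (D i) x -> x i < m i ->
  mtrans (threshold_model m D) x (set_coord x i (x i).+1).
Proof.
move=> sat xi; have hx : threshold_model m D x i = (x i).+1.
  by rewrite ffunE sat; apply/minn_idPr.
by have := mtrans_set_coord (h := threshold_model m D) (x := x) (i := i);
  rewrite hx ltnSn; apply; lia.
Qed.

Lemma threshold_model_down (D : 'I_n -> tdnf n) (x : mstate n) (i : 'I_n) :
  ~~ eval_tdnf m (D i) x -> 0 < x i <= m i ->
  mtrans (threshold_model m D) x (set_coord x i (x i).-1).
Proof.
move=> unsat xi; have hx : threshold_model m D x i = (x i).-1.
  by rewrite ffunE (negbTE unsat); apply/minn_idPr; lia.
have := mtrans_set_coord (h := threshold_model m D) (x := x) (i := i).
by rewrite hx ifF; [apply; lia | lia].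
Qed.

End ThresholdModel.

Section Simulation.
Variables (n : nat) (m : 'I_n -> nat) (f : bstate n -> bstate n) (D : 'I_n -> tdnf n).
Hypothesis m_ge1 : forall j, 1 <= m j.
Hypothesis D_repr : forall j a, eval_dnf (strip (D j)) a = f a j.
Hypothesis D_thresholds : forall j, thresholds_ok m (D j).
Hypothesis no_self_inhibition : forall j, 1 < m j -> ~~ self_inhibited (strip (D j)) j.

Lemma lift_stateE (a : bstate n) j : lift_state m a j = if a j then m j else 0.
Proof.
by rewrite ffunE; case: (a j); case: (ltnP 1 (m j)) => //; have := m_ge1 j; lia.
Qed.

Lemma set_coord_lift (a : bstate n) i :
  set_coord (lift_state m a) i (if a i then m i else 0) = lift_state m a.
Proof. by rewrite -lift_stateE set_coord_id. Qed.

Lemma eval_tdnf_lift_f (a : bstate n) i :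
  eval_tdnf m (D i) (lift_state m a) = f a i.
Proof. by rewrite eval_tdnf_lift ?D_repr. Qed.

Lemma eval_lift_up (a : bstate n) i k :
  a i = false -> f a i -> k < m i ->
  eval_tdnf m (D i) (set_coord (lift_state m a) i k).
Proof.
move=> ai fai km.
have at0 : eval_tdnf m (D i) (set_coord (lift_state m a) i 0).
  by move: (set_coord_lift a i); rewrite ai /= => ->; rewrite eval_tdnf_lift_f.
case: (ltnP 1 (m i)) => mi.
  exact: eval_tdnf_set_coord_mono mi (no_self_inhibition mi) (leq0n k) at0.
by have -> : k = 0 by lia.
Qed.

Lemma eval_lift_down (a : bstate n) i k :
  a i -> f a i = false -> 0 < k <= m i ->
  ~~ eval_tdnf m (D i) (set_coord (lift_state m a) i k).
Proof.
move=> ai fai km.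
have atm : ~~ eval_tdnf m (D i) (set_coord (lift_state m a) i (m i)).
  by move: (set_coord_lift a i); rewrite ai /= => ->; rewrite eval_tdnf_lift_f fai.
case: (ltnP 1 (m i)) => mi.
  apply: contra atm; apply: eval_tdnf_set_coord_mono mi (no_self_inhibition mi) _.
  by case/andP: km.
by have -> : k = m i by lia.
Qed.

Lemma btrans_lift (a a' : bstate n) :
  btrans f a a' ->
  trajectory (mtrans (threshold_model m D)) (lift_state m a) (lift_state m a').
Proof.
case/existsP=> i /and3P [flips /eqP a'i /forallP others].
pose g k := set_coord (lift_state m a) i k.
have ga : g (if a i then m i else 0) = lift_state m a := set_coord_lift a i.
have ga' : g (if f a i then m i else 0) = lift_state m a'.
  apply/ffunP => j; rewrite ffunE; case: eqVneq => [-> | ji].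
    by rewrite lift_stateE a'i.
  by rewrite !lift_stateE; move/implyP: (others j) => /(_ ji) /eqP ->.
have gi k : g k i = k by rewrite ffunE eqxx.
move: flips ga ga'; case ai: (a i); case fai: (f a i) => // _ <- <-.
- apply: trajectory_descend => // k km.
  have unsat : ~~ eval_tdnf m (D i) (g k.+1) by apply: eval_lift_down; lia.
  have := threshold_model_down unsat; rewrite gi /g set_coord_set; apply; lia.
- apply: trajectory_climb => // k km.
  have sat : eval_tdnf m (D i) (g k) by apply: eval_lift_up.
  have := threshold_model_up sat; rewrite gi /g set_coord_set; apply; lia.
Qed.

End Simulation.

Theorem proposition1 (n : nat) (m : 'I_n -> nat) (f : bstate n -> bstate n)
    (D : 'I_n -> tdnf n) :
  0 < n ->
  (forall j, 1 <= m j) ->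
  (exists j, 1 < m j) ->
  (forall j0, shortest_dnf (strip (D j0)) (fun a => f a j0)) ->
  (forall j0, thresholds_ok m (D j0)) ->
  refinement m f (threshold_model m D) ->
  (forall j, 1 < m j -> ~~ self_inhibited (strip (D j)) j) ->
  forall a a' : bstate n,
    trajectory (btrans f) a a' ->
    trajectory (mtrans (threshold_model m D)) (lift_state m a) (lift_state m a').
Proof.
move=> _ m_ge1 _ shortest thresholds _ no_self.
have D_repr j a : eval_dnf (strip (D j)) a = f a j by case: (shortest j) => ->.
exact: trajectory_simulation (btrans_lift m_ge1 D_repr thresholds no_self).
Qed.
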